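(* Let $N\ge 2$ and let $p$ be a path of length $N$ with steps $s_0,\dots,s_{N-1}$. Then $p$ is a perfect star path if and only if there is an integer constant $S$ with $|S|=L>1$ such that $s_n=S$ for all $n\in\{0,1,\dots,N-1\}$.
   Context: A path of length $N$ is a vector $p=(p_0,\dots,p_{N-1})$ whose entries are the integers $0,\dots,N-1$ in some order; indices are cyclic, $p_N=p_0$. The path differences are $d_n=p_{n+1}-p_n$, and the steps are $s_n=d_n$ if $|d_n|<N/2$; $s_n=N/2$ if $|d_n|=N/2$; $s_n=d_n-N$ if $d_n>N/2$; $s_n=d_n+N$ if $d_n<-N/2$. The edge lengths of $p$ are $|s_0|,\dots,|s_{N-1}|$. The path is a star path if $|s_n|\ne 1$ for all $n$ (equivalently, for every $n$, $(p_{n+1}-p_n)\bmod N\notin\{1,N-1\}$, where $x\bmod N$ is the remainder in $\{0,\dots,N-1\}$). A perfect star path is a star path all of whose edge lengths $|s_n|$ are equal. *)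

From mathcomp Require Import all_boot all_order all_algebra.
Set Implicit Arguments. Unset Strict Implicit. Unset Printing Implicit Defensive.
Import Order.TTheory GRing.Theory Num.Theory.
Local Open Scope ring_scope.

Definition is_path (N : nat) (p : seq nat) : Prop := perm_eq p (iota 0 N).

Definition pent (N : nat) (p : seq nat) (n : nat) : int := (nth 0%N p (n %% N))%:Z.

Definition pdiff (N : nat) (p : seq nat) (n : nat) : int := pent N p n.+1 - pent N p n.

(* Step from a difference d, with comparisons to N/2 done as 2|d| vs N. *)
Definition step_of (N : nat) (d : int) : int :=
  if `|d| * 2 < N%:Z then d
  else if `|d| * 2 == N%:Z then (N %/ 2)%N%:Z
  else if d * 2 > N%:Z then d - N%:Z
  else d + N%:Z.

Definition pstep (N : nat) (p : seq nat) (n : nat) : int := step_of N (pdiff N p n).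

Definition edge_len (N : nat) (p : seq nat) (n : nat) : int := `|pstep N p n|.

Definition star_path (N : nat) (p : seq nat) : Prop :=
  forall n, (n < N)%N -> edge_len N p n != 1.

Definition perfect_star_path (N : nat) (p : seq nat) : Prop :=
  star_path N p /\
  forall n m, (n < N)%N -> (m < N)%N -> edge_len N p n = edge_len N p m.

From mathcomp Require Import all_boot all_order all_algebra zify.
Import Order.TTheory GRing.Theory Num.Theory.
Set Implicit Arguments. Unset Strict Implicit.
Local Open Scope ring_scope.

(* Adjacent entries of a
   permutation differ, so the first step is nonzero and the star condition
   makes its length L > 1; then 2L <= N gives N > 2. If two consecutive steps
   of equal length were opposite, then p_{n+2} = p_n (mod N), hence
   p_{n+2} = p_n, impossible in a permutation of length N > 2. So all steps
   equal the first one. *)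

Section StepOf.

Variables (N : nat) (d : int).
Hypothesis d_small : `|d| < N%:Z.

Lemma step_of_cases :
  step_of N d = d \/ step_of N d = d + N%:Z \/ step_of N d = d - N%:Z.
Proof. by rewrite /step_of; repeat (case: ifP => ?); lia. Qed.

Lemma step_of_le_half : `|step_of N d| * 2 <= N%:Z.
Proof. by rewrite /step_of; repeat (case: ifP => ?); lia. Qed.

Lemma step_of_eq0 : (step_of N d == 0) = (d == 0).
Proof. by rewrite /step_of; repeat (case: ifP => ?); lia. Qed.

End StepOf.

Section PathSteps.

Variables (N : nat) (p : seq nat).
Hypotheses (N_gt0 : (0 < N)%N) (path_p : is_path N p).

Lemma size_path : size p = N.
Proof. by rewrite (perm_size path_p) size_iota. Qed.

Lemma pent_range n : 0 <= pent N p n < N%:Z.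
Proof.
have : nth 0%N p (n %% N) \in p by rewrite mem_nth // size_path ltn_pmod.
by rewrite /pent (perm_mem path_p) mem_iota => /andP[_]; lia.
Qed.

Lemma pent_inj i j : pent N p i = pent N p j -> i = j %[mod N].
Proof.
have p_uniq : uniq p by rewrite (perm_uniq path_p) iota_uniq.
rewrite /pent => /eqP; rewrite eqz_nat nth_uniq // ?size_path ?ltn_pmod //.
exact/eqP.
Qed.

Lemma pdiff_small n : `|pdiff N p n| < N%:Z.
Proof. by rewrite /pdiff; move: (pent_range n.+1) (pent_range n); lia. Qed.

Lemma pstep_eq0 n : (pstep N p n == 0) = (pdiff N p n == 0).
Proof. exact/step_of_eq0/pdiff_small. Qed.

Lemma pstep_le_half n : `|pstep N p n| * 2 <= N%:Z.
Proof. exact/step_of_le_half/pdiff_small. Qed.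

Lemma pstep_neq0 n : (1 < N)%N -> pstep N p n != 0.
Proof.
move=> N_gt1; rewrite pstep_eq0 /pdiff subr_eq0; apply/eqP => /pent_inj/eqP.
by rewrite -addn1 -{2}[n]addn0 eqn_modDl !modn_small.
Qed.

Lemma pstep_cancel_pent n :
  pstep N p n.+1 + pstep N p n = 0 -> pent N p n.+2 = pent N p n.
Proof.
move: (pent_range n.+2) (pent_range n).
move: (step_of_cases (pdiff_small n)) (step_of_cases (pdiff_small n.+1)).
by rewrite /pstep /pdiff; lia.
Qed.

Lemma pstep_no_reversal n : (2 < N)%N -> pstep N p n.+1 + pstep N p n != 0.
Proof.
move=> N_gt2; apply/eqP => /pstep_cancel_pent/pent_inj/eqP.
by rewrite -addn2 -{2}[n]addn0 eqn_modDl !modn_small.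
Qed.

Lemma pstep_const_of_edge_len_const :
  (2 < N)%N ->
  (forall n, (n < N)%N -> edge_len N p n = edge_len N p 0) ->
  forall n, (n < N)%N -> pstep N p n = pstep N p 0.
Proof.
move=> N_gt2 len_const; elim=> [//|n IH] Sn_ltN.
have n_ltN : (n < N)%N := ltnW Sn_ltN.
have same_len : `|pstep N p n.+1| = `|pstep N p n|.
  by have := len_const _ Sn_ltN; rewrite -(len_const _ n_ltN).
have := pstep_no_reversal n N_gt2; rewrite -(IH n_ltN).
by move: same_len; rewrite (IH n_ltN); lia.
Qed.

End PathSteps.

Theorem mainTheorem3 (N : nat) (p : seq nat) :
  (2 <= N)%N -> is_path N p ->
  (perfect_star_path N p <->
   exists S : int, 1 < `|S| /\ forall n, (n < N)%N -> pstep N p n = S).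
Proof.
move=> N_ge2 path_p; have N_gt0 : (0 < N)%N by lia.
split=> [[star len_eq] | [S [S_gt1 steps_S]]]; last first.
  split=> [n n_ltN | n m n_ltN m_ltN]; rewrite /edge_len !steps_S //.
  by apply/eqP; lia.
have len0_gt1 : 1 < `|pstep N p 0|.
  have := star 0%N N_gt0; have := pstep_neq0 N_gt0 path_p 0 N_ge2.
  by rewrite /edge_len; lia.
have N_gt2 : (2 < N)%N by have := pstep_le_half N_gt0 path_p 0; lia.
exists (pstep N p 0); split=> //.
by apply: pstep_const_of_edge_len_const => // n n_ltN; apply: len_eq.
Qed.
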